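(* Let $\mathcal{A}$ be an alternating parity automaton and let $\mathcal{B}_{\mathcal{A}}$ be constructed from $\mathcal{A}$ as described in the context. If $\mathcal{B}_{\mathcal{A}}$ is GFG, then $\mathcal{A}$ is $\exists$-GFG.
   Context: An alternating parity automaton $\mathcal{A}=(\Sigma,Q,\iota,\delta,\alpha)$ has finite alphabet $\Sigma$, states $Q$, initial state $\iota$, transition function $\delta\colon Q\times\Sigma\to\mathcal{B}^+(Q)$ (positive Boolean formulas over atoms in $Q$), and priorities $\alpha\colon Q\times\Sigma\times Q\to\Gamma\subseteq\mathbb{N}$ on transitions; a sequence of transitions is accepting iff the maximal priority seen infinitely often is even. The model-checking game on $w=a_0a_1\dots$: from $\iota$, in round $i$ from $q_i$ the players descend $\delta(q_i,a_i)$, Eve choosing at disjunctions, Adam at conjunctions, to an atom $q_{i+1}$; Eve wins iff the transition sequence is accepting; $w\in L(\mathcal{A})$ iff Eve wins. Eve's letter game: each round Adam picks a letter and the players descend the transition condition of the current state over it; Eve wins iff the generated word is not in $L(\mathcal{A})$ or the generated path is accepting; $\mathcal{A}$ is $\exists$-GFG iff Eve wins this game. Boxes: for a letter $a$, a local strategy $\sigma$ chooses for each state $q$ and each subformula $\psi_1\vee\psi_2$ of $\delta(q,a)$ one disjunct; the box $\beta(\mathcal{A},a,\sigma)$ is the set of $(q,a,q')$ such that atom $q'$ is reachable from $\delta(q,a)$ following $\sigma$ at disjunctions and either conjunct at conjunctions; $\mathrm{Boxes}_{\mathcal{A},a}$ is the set of these boxes, $\mathrm{Boxes}_{\mathcal{A}}=\bigcup_a\mathrm{Boxes}_{\mathcal{A},a}$.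 A word $\beta_0\beta_1\dots$ over $\mathrm{Boxes}_{\mathcal{A}}$ is universally accepting if every transition sequence $(q_i,a_i,q_{i+1})$ with $q_0=\iota$ and $(q_i,a_i,q_{i+1})\in\beta_i$ is accepting. Construction: let $\mathcal{B}$ be a deterministic parity automaton over alphabet $\mathrm{Boxes}_{\mathcal{A}}$ recognising exactly the universally accepting words. $\mathcal{B}_{\mathcal{A}}$ is the nondeterministic automaton over $\Sigma$ with the states, initial state and acceptance condition of $\mathcal{B}$ that, on reading a letter $a$ in state $p$, nondeterministically guesses a box $\beta\in\mathrm{Boxes}_{\mathcal{A},a}$ and moves to $\delta_{\mathcal{B}}(p,\beta)$; runs of $\mathcal{B}_{\mathcal{A}}$ on $w=w_0w_1\dots$ correspond to sequences of boxes $\beta_i\in\mathrm{Boxes}_{\mathcal{A},w_i}$, and such a run is accepting iff $\mathcal{B}$ accepts $\beta_0\beta_1\dots$. $\mathcal{B}_{\mathcal{A}}$ is GFG iff Eve wins the game in which, each round, Adam picks a letter $a$ and Eve picks a box in $\mathrm{Boxes}_{\mathcal{A},a}$, Eve winning iff the generated word is not in $L(\mathcal{B}_{\mathcal{A}})$ or the generated run is accepting. *)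

From mathcomp Require Export all_boot.
Set Implicit Arguments. Unset Strict Implicit. Unset Printing Implicit Defensive.

Inductive pbf (Q : Type) : Type :=
| PAtom of Q
| PAnd of pbf Q & pbf Q
| POr of pbf Q & pbf Q.

Record APA (Sigma Q : finType) := {
  a_init : Q;
  a_delta : Q -> Sigma -> pbf Q;
  a_prio : Q -> Sigma -> Q -> nat }.

(* [reach f ch pre p q']: descending formula [f] (which sits at position [pre]
   in the enclosing formula) along the path [p] (false = left, true = right)
   ends in atom [q'], where at disjunction nodes the direction is the one
   chosen by [ch] (applied to the position of the node) and at conjunctions
   any direction may be taken. *)
Fixpoint reach (Q : Type) (f : pbf Q) (ch : seq bool -> bool)
    (pre p : seq bool) (q' : Q) {struct f} : Prop :=
  match f, p with
  | PAtom q, [::] => q = q'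
  | PAnd f1 f2, b :: p' => reach (if b then f2 else f1) ch (rcons pre b) p' q'
  | POr f1 f2, b :: p' =>
      b = ch pre /\ reach (if b then f2 else f1) ch (rcons pre b) p' q'
  | _, _ => False
  end.

Definition parity_acc (c : nat -> nat) : Prop :=
  exists n, ~~ odd n /\ (forall m, exists2 k, m <= k & c k = n) /\
            (exists m, forall k, m <= k -> c k <= n).

Section Defs.
Variables (Sigma Q : finType) (A : APA Sigma Q).

(* Model-checking game on w: Eve's strategy sees the history of rounds
   (state, path taken in the formula), the current state and the position of
   the current disjunction node. *)
Definition mc_play (w : nat -> Sigma)
    (tau : seq (Q * seq bool) -> Q -> seq bool -> bool)
    (q : nat -> Q) (p : nat -> seq bool) : Prop :=
  q 0 = a_init A /\
  forall i, reach (a_delta A (q i) (w i))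
                  (tau [seq (q j, p j) | j <- iota 0 i] (q i)) [::] (p i) (q i.+1).

Definition inL (w : nat -> Sigma) : Prop :=
  exists tau, forall q p, mc_play w tau q p ->
    parity_acc (fun i => a_prio A (q i) (w i) (q i.+1)).

Definition letter_play
    (sg : seq (Q * Sigma * seq bool) -> Q -> Sigma -> seq bool -> bool)
    (w : nat -> Sigma) (q : nat -> Q) (p : nat -> seq bool) : Prop :=
  q 0 = a_init A /\
  forall i, reach (a_delta A (q i) (w i))
                  (sg [seq (q j, w j, p j) | j <- iota 0 i] (q i) (w i))
                  [::] (p i) (q i.+1).

Definition exists_GFG : Prop :=
  exists sg, forall w q p, letter_play sg w q p ->
    ~ inL w \/ parity_acc (fun i => a_prio A (q i) (w i) (q i.+1)).

(* b is the box beta(A, a, sigma) for some local strategy sigma,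
   i.e. b belongs to Boxes_{A,a}. *)
Definition boxOf (a : Sigma) (b : {set Q * Sigma * Q}) : Prop :=
  exists sigma : Q -> seq bool -> bool,
    forall t : Q * Sigma * Q, t \in b <->
      (t.1.2 = a /\ exists p, reach (a_delta A t.1.1 a) (sigma t.1.1) [::] p t.2).

Definition BoxT := {b : {set Q * Sigma * Q} | exists a, boxOf a b}.

Definition univ_acc (beta : nat -> BoxT) : Prop :=
  forall (q : nat -> Q) (a : nat -> Sigma), q 0 = a_init A ->
    (forall i, (q i, a i, q i.+1) \in proj1_sig (beta i)) ->
    parity_acc (fun i => a_prio A (q i) (a i) (q i.+1)).
End Defs.

Fixpoint drun (P L : Type) (p0 : P) (d : P -> L -> P) (w : nat -> L) (i : nat) : P :=
  match i with 0 => p0 | i'.+1 => d (drun p0 d w i') (w i') end.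

Definition dpa_acc (P L : Type) (p0 : P) (d : P -> L -> P) (c : P -> L -> nat)
    (w : nat -> L) : Prop :=
  parity_acc (fun i => c (drun p0 d w i) (w i)).

Section BA.
Variables (Sigma Q : finType) (A : APA Sigma Q) (P : finType)
  (p0 : P) (dB : P -> BoxT A -> P) (cB : P -> BoxT A -> nat).

Definition BA_lang (w : nat -> Sigma) : Prop :=
  exists beta : nat -> BoxT A,
    (forall i, boxOf A (w i) (proj1_sig (beta i))) /\ dpa_acc p0 dB cB beta.

Definition BA_GFG : Prop :=
  exists s : seq Sigma -> Sigma -> BoxT A,
    (forall h a, boxOf A a (proj1_sig (s h a))) /\
    forall w : nat -> Sigma, BA_lang w ->
      dpa_acc p0 dB cB (fun i => s [seq w j | j <- iota 0 i] (w i)).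
End BA.

From mathcomp Require Import all_boot boolp zify.
Set Implicit Arguments. Unset Strict Implicit. Unset Printing Implicit Defensive.

(* The model-checking game of A on a word w is a parity game on the positions
   (round, state), in which Eve picks a local strategy and Adam a path through the
   transition condition. Parity games are positionally determined, so if w is in
   L(A), Eve wins with a strategy depending only on the round and the state. In each
   round such a strategy is a local strategy for all states, i.e. a box, and the
   resulting box sequence is universally accepting: L(A) is included in L(B_A).
   In the letter game Eve follows, round by round, the local strategy of the box
   chosen by the GFG strategy of B_A. If the word is in L(A), it is in L(B_A), so
   these boxes are accepted by B, i.e. universally accepting, and the play, which
   stays inside them, is accepting.
   Positional determinacy (in the form: a winning strategy with memory can be made
   positional) is proved by Zielonka's induction on the maximal priority. *)

Lemma ex_least (P : nat -> Prop) :
  (exists n, P n) -> exists n, P n /\ forall m, P m -> n <= m.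
Proof.
move=> exP; have exb : exists n, `[< P n >] by case: exP => n Pn; exists n; apply/asboolP.
exists (ex_minn exb); case: ex_minnP => n /asboolP Pn min_n.
by split=> // m /asboolP /min_n.
Qed.

Lemma nonincreasing_eventually_const (a : nat -> nat) :
  (forall n, a n.+1 <= a n) -> exists N, forall n, N <= n -> a n = a N.
Proof.
move=> le_a; have ex_val : exists v, exists n, a n = v by exists (a 0), 0.
have [_ [[N <-] minN]] := ex_least ex_val.
exists N => n /subnKC <-; elim: (n - N) => [|k IHk]; first by rewrite addn0.
apply/eqP; rewrite eqn_leq minN; last by exists (N + k.+1).
by rewrite addnS -IHk le_a.
Qed.

Lemma parity_acc_eq_from (c c' : nat -> nat) N :
  (forall j, N <= j -> c j = c' j) -> parity_acc c -> parity_acc c'.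
Proof.
move=> eq_cc' [n [ev_n [inf_n [m0 le_n]]]]; exists n; split=> //; split.
  move=> m; have [k le_mk ck] := inf_n (maxn m N).
  by exists k; [lia | rewrite -eq_cc' //; lia].
by exists (maxn m0 N) => k le_k; rewrite -eq_cc'; [apply: le_n|]; lia.
Qed.

Lemma parity_acc_max_even (c : nat -> nat) d : ~~ odd d -> (forall j, c j <= d) ->
  (forall N, exists2 k, N <= k & c k = d) -> parity_acc c.
Proof. by move=> ev_d le_cd inf_d; exists d; do !split=> //; exists 0. Qed.

Lemma parity_acc_max_odd (c : nat -> nat) d : odd d -> (forall j, c j <= d) ->
  (forall N, exists2 k, N <= k & c k = d) -> ~ parity_acc c.
Proof.
move=> odd_d le_cd inf_d [n [ev_n [inf_n [m0 le_n]]]].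
have [k /le_n + ck] := inf_d m0; have [k' _ ck'] := inf_n 0.
have := le_cd k'; rewrite ck ck' => le_nd le_dn.
have eq_nd : n = d by lia.
by rewrite eq_nd odd_d in ev_n.
Qed.

Lemma chain_limit T (f : nat -> nat -> T) (b : nat -> nat) : (forall n, n <= b n) ->
  (forall n, b n <= b n.+1 /\ forall j, j < b n -> f n.+1 j = f n j) ->
  forall n j, j < b n -> f j.+1 j = f n j.
Proof.
move=> le_nb stepf.
pose r n n' := b n <= b n' /\ forall j, j < b n -> f n' j = f n j.
have mono : {homo id : n n' / n <= n' >-> r n n'}.
  apply: homo_leq => [n|n1 n2 n3 [le12 e12] [le23 e23]|n]; [by split | | exact: stepf].
  by split=> [|j lt_j]; [lia | rewrite e23 ?e12 //; lia].
move=> n j lt_jb; have [_ e1] := mono n (maxn n j.+1) (leq_maxl _ _).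
have [_ e2] := mono j.+1 (maxn n j.+1) (leq_maxr _ _).
by rewrite -e1 // -e2 //; apply: leq_trans (le_nb _).
Qed.

Section Game.
Variables (Q : countType) (M Opt : Type) (move : nat -> Q -> Opt -> M -> Q -> Prop).
Hypothesis move_total : forall i x o, exists m y, move i x o m y.
Variable o0 : Opt.

(* Positions are pairs (round, state): at (i, x) Eve picks an option o and Adam
   answers with a move m leading to (i.+1, y). *)

Local Notation edge R q j := (R j%N (q j%N) (q j.+1)).

Definition step i x o y := exists m, move i x o m y.
Definition pstep (s : nat -> Q -> Opt) (q : nat -> Q) j := step j (q j) (s j (q j)) (q j.+1).
Definition follows s i0 q := forall j, i0 <= j -> pstep s q j.

Definition hist (q : nat -> Q) (m : nat -> M) i0 k := [seq (q j, m j) | j <- iota i0 (k - i0)].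
Definition hstep (tau : seq (Q * M) -> Q -> Opt) i0 q m j :=
  move j (q j) (tau (hist q m i0 j) (q j)) (m j) (q j.+1).
Definition hfollows tau i0 q m := forall j, i0 <= j -> hstep tau i0 q m j.
Definition residual (tau : seq (Q * M) -> Q -> Opt) q m i0 k h := tau (hist q m i0 k ++ h).

Definition splice T k (q r : nat -> T) j := if j < k then q j else r j.

Lemma spliceL T k (q r : nat -> T) j : j < k -> splice k q r j = q j.
Proof. by rewrite /splice => ->. Qed.

Lemma spliceR T k (q r : nat -> T) j : k <= j -> splice k q r j = r j.
Proof. by rewrite /splice ltnNge => ->. Qed.

Lemma splice_le T k (q r : nat -> T) j : r k = q k -> j <= k -> splice k q r j = q j.
Proof. by rewrite leq_eqVlt => rq /predU1P[->|/spliceL//]; rewrite spliceR. Qed.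

Lemma hfollows_exists tau i0 x : exists q m, q i0 = x /\ hfollows tau i0 q m.
Proof.
have [nx nxP] : {nx : nat * Q * Opt -> M * Q & forall t, move t.1.1 t.1.2 t.2 (nx t).1 (nx t).2}.
  apply: (choice (P := fun t p => move t.1.1 t.1.2 t.2 p.1 p.2)) => -[[i y] o] /=.
  by have [m [y' ?]] := move_total i y o; exists (m, y').
(* [g n] is the history and the current state after [n] rounds. *)
pose g := fix g n := if n is n'.+1 then
  let p := nx (i0 + n', (g n').2, tau (g n').1 (g n').2) in (rcons (g n').1 ((g n').2, p.1), p.2)
  else ([::], x).
pose q j := (g (j - i0)).2.
pose m j := (nx (j, q j, tau (g (j - i0)).1 (q j))).1.
have histE n : hist q m i0 (i0 + n) = (g n).1.
  elim: n => [|n IHn]; first by rewrite /hist addn0 subnn.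
  move: IHn; rewrite /hist !addKn -addn1 iotaD map_cat /= => ->.
  by rewrite addn1 cats1 /m /q addKn.
exists q, m; split=> [|j /subnKC <-]; first by rewrite /q subnn.
rewrite /hstep histE /q /m -addnS !addKn /=.
by rewrite /q addKn; apply: nxP (_, _, _).
Qed.

Lemma follows_exists s i0 x : exists q, q i0 = x /\ follows s i0 q.
Proof.
(* The length of the history tells the current round. *)
have [q [m [q_i0 hq]]] := hfollows_exists (fun h => s (i0 + size h)) i0 x.
exists q; split=> // j le_i0j; exists (m j).
by have := hq j le_i0j; rewrite /hstep size_map size_iota subnKC.
Qed.

Lemma follows_splice s i0 k q r : i0 <= k -> (forall j, i0 <= j < k -> pstep s q j) ->
  r k = q k -> follows s k r -> follows s i0 (splice k q r).
Proof.
move=> le_i0k sq rq sr j le_i0j; case: (ltnP j k) => [lt_jk|le_kj].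
  by rewrite /pstep !splice_le ?(ltnW lt_jk) //; apply: sq; lia.
by rewrite /pstep !spliceR //; [apply: sr | lia].
Qed.

Lemma hist_eq q m q' m' i0 k : (forall j, i0 <= j < k -> q j = q' j /\ m j = m' j) ->
  hist q m i0 k = hist q' m' i0 k.
Proof.
move=> eq_qm; apply/eq_in_map => j; rewrite mem_iota => j_in.
by have [-> ->] := eq_qm j ltac:(lia).
Qed.

Lemma hist_cat q m i0 k j : i0 <= k <= j -> hist q m i0 j = hist q m i0 k ++ hist q m k j.
Proof.
move=> le_i0kj; rewrite /hist -map_cat.
have -> : j - i0 = (k - i0) + (j - k) by lia.
by rewrite iotaD subnKC //; lia.
Qed.

Lemma hfollows_splice tau i0 k q m r m' : i0 <= k ->
  (forall j, i0 <= j < k -> hstep tau i0 q m j) -> r k = q k ->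
  hfollows (residual tau q m i0 k) k r m' -> hfollows tau i0 (splice k q r) (splice k m m').
Proof.
move=> le_i0k hq rq hr j le_i0j.
have histL l : l <= k -> hist (splice k q r) (splice k m m') i0 l = hist q m i0 l.
  by move=> le_lk; apply: hist_eq => j' j'_in; rewrite !spliceL //; lia.
case: (ltnP j k) => [lt_jk|le_kj].
  rewrite /hstep histL ?(ltnW lt_jk) // (spliceL m m' lt_jk) !splice_le ?(ltnW lt_jk) //.
  by apply: hq; lia.
rewrite /hstep (@hist_cat _ _ i0 k j) ?histL ?le_i0k //.
have -> : hist (splice k q r) (splice k m m') k j = hist r m' k j.
  by apply: hist_eq => j' j'_in; rewrite !spliceR //; lia.
by rewrite !spliceR //; [apply: hr | lia].
Qed.

Section Winning.
Variables (G B : nat -> Q -> Q -> Prop) (c : nat -> Q -> Q -> nat).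

(* G-edges end a play with a win for Eve and B-edges with a loss; they describe the
   subgames of the induction without changing the arena. *)
Definition hitsG i0 q := exists k, [/\ i0 <= k, edge G q k & forall j, i0 <= j < k -> ~ edge B q j].
Definition avoidsB i0 q := forall j, i0 <= j -> ~ edge B q j.
Definition won i0 q := hitsG i0 q \/ (avoidsB i0 q /\ parity_acc (fun j => edge c q j)).

Definition pwin_with s i0 x := forall q, q i0 = x -> follows s i0 q -> won i0 q.
Definition pwin i0 x := exists s, pwin_with s i0 x.
Definition hwin_with tau i0 x := forall q m, q i0 = x -> hfollows tau i0 q m -> won i0 q.
Definition hwin i0 x := exists tau, hwin_with tau i0 x.

Lemma won_eq_from i0 q q' : (forall j, i0 <= j -> q j = q' j) -> won i0 q -> won i0 q'.
Proof.
move=> eq_q; have eq_edge j : i0 <= j -> q j = q' j /\ q j.+1 = q' j.+1.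
  by move=> le_i0j; rewrite !eq_q //; lia.
case=> [[k [le_i0k Gk noB]] | [noB par]].
  left; exists k; have [<- <-] := eq_edge k le_i0k; split=> // j j_in.
  by have [<- <-] := eq_edge j ltac:(lia); apply: noB.
right; split=> [j le_i0j|]; first by have [<- <-] := eq_edge j le_i0j; apply: noB.
by apply: parity_acc_eq_from par => j /eq_edge[-> ->].
Qed.

Lemma won_later i0 k q : i0 <= k ->
  (forall j, i0 <= j < k -> ~ edge G q j /\ ~ edge B q j) -> won i0 q -> won k q.
Proof.
move=> le_i0k calm [[l [le_i0l Gl noB]] | [noB par]].
  case: (ltnP l k) => [lt_lk|le_kl]; first by have [] := calm l; first lia.
  by left; exists l; split=> // j j_in; apply: noB; lia.
by right; split=> // j le_kj; apply: noB; lia.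
Qed.

Lemma won_earlier i0 k q : i0 <= k -> (forall j, i0 <= j < k -> ~ edge B q j) ->
  won k q -> won i0 q.
Proof.
move=> le_i0k noB0 [[l [le_kl Gl noB]] | [noB par]].
  left; exists l; split=> [||j j_in]; [lia | by [] |].
  by case: (ltnP j k) => ?; [apply: noB0 | apply: noB]; lia.
right; split=> // j le_i0j.
by case: (ltnP j k) => ?; [apply: noB0 | apply: noB]; lia.
Qed.

Lemma won_noB i0 q j : won i0 q -> i0 <= j -> (forall l, i0 <= l <= j -> ~ edge G q l) ->
  ~ edge B q j.
Proof.
move=> [[l [le_i0l Gl noB]]|[noB _]] le_i0j noG Bj; last exact: (noB j).
by case: (ltnP j l) => ?; [apply: (noB j) | apply: (noG l)] => //; lia.
Qed.

Lemma hitsG_or_invariant (W : nat -> Q -> Prop) i0 q : W i0 (q i0) ->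
  (forall k, i0 <= k -> W k (q k) -> edge G q k \/ (~ edge B q k /\ W k.+1 (q k.+1))) ->
  hitsG i0 q \/ forall k, i0 <= k -> [/\ W k (q k), ~ edge G q k & ~ edge B q k].
Proof.
move=> W_i0 W_step; case: (EM (hitsG i0 q)) => [|noG]; [by left | right].
suff inv n : W (i0 + n) (q (i0 + n)) /\ forall j, i0 <= j < i0 + n -> ~ edge B q j.
  move=> k /subnKC <-; have [Wk _] := inv (k - i0); have [_ noB] := inv (k - i0).+1.
  have notG : ~ edge G q (i0 + (k - i0)).
    move=> Gk; apply: noG; exists (i0 + (k - i0)); split=> // [|j j_in]; first lia.
    by apply: noB; lia.
  by split=> //; apply: noB; lia.
elim: n => [|n [Wn noB]]; first by rewrite addn0; split=> // j; lia.
have [Gn|[notB Wn1]] := W_step _ (leq_addr n i0) Wn.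
  by case: noG; exists (i0 + n); split=> //; lia.
rewrite addnS; split=> // j j_in; case: (ltnP j (i0 + n)) => ?; first by apply: noB; lia.
by have -> : j = i0 + n by lia.
Qed.

Lemma pwin_with_step s k y y' : pwin_with s k y -> step k y (s k y) y' ->
  G k y y' \/ (~ B k y y' /\ pwin_with s k.+1 y').
Proof.
move=> win_ky sky'; case: (EM (G k y y')) => [|notG]; [by left | right].
pose pre (r : nat -> Q) := splice k.+1 (fun=> y) r.
have preE r : r k.+1 = y' -> pre r k = y /\ pre r k.+1 = y'.
  by move=> r_k1; rewrite /pre spliceL // spliceR.
have pre_won r : r k.+1 = y' -> follows s k.+1 r -> won k (pre r).
  move=> r_k1 hr; apply: win_ky => [|j]; first by rewrite /pre spliceL.
  rewrite leq_eqVlt => /predU1P[<-|lt_kj]; first by rewrite /pstep; case: (preE r r_k1) => -> ->.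
  by rewrite /pstep /pre !spliceR //; [apply: hr | lia].
have [r0 [r0_k1 hr0]] := follows_exists s k.+1 y'.
have notB : ~ B k y y'.
  have := won_noB (pre_won r0 r0_k1 hr0) (leqnn k); case: (preE r0 r0_k1) => -> ->; apply.
  move=> l l_in; have -> : l = k by lia.
  by case: (preE r0 r0_k1) => -> ->.
split=> // r r_k1 hr; apply: (@won_eq_from _ (pre r)) => [j ?|]; first exact: spliceR.
apply: won_later (pre_won r r_k1 hr) => // j j_in; have -> : j = k by lia.
by case: (preE r r_k1) => -> ->.
Qed.

Section Residual.
Variables (tau : seq (Q * M) -> Q -> Opt) (i0 k : nat) (q : nat -> Q) (m : nat -> M).
Hypotheses (win_tau : hwin_with tau i0 (q i0)) (le_i0k : i0 <= k).
Hypothesis hq : forall j, i0 <= j < k -> hstep tau i0 q m j.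
Hypothesis noG : forall j, i0 <= j < k -> ~ edge G q j.

Lemma won_splice_residual r m' : r k = q k -> hfollows (residual tau q m i0 k) k r m' ->
  won i0 (splice k q r).
Proof.
move=> rq hr; apply: win_tau (hfollows_splice le_i0k hq rq hr).
by rewrite splice_le.
Qed.

Lemma hwin_prefix_noB j : i0 <= j < k -> ~ edge B q j.
Proof.
move=> j_in; have [r [m' [rq hr]]] := hfollows_exists (residual tau q m i0 k) k (q k).
have agree l : l < k -> splice k q r l = q l /\ splice k q r l.+1 = q l.+1.
  by move=> lt_lk; rewrite !splice_le //; lia.
have := won_noB (won_splice_residual rq hr) (j := j); case: (agree j) => [|-> ->]; first lia.
apply; first lia.
by move=> l l_in; case: (agree l) => [|-> ->]; [lia | apply: noG; lia].
Qed.

Lemma hwin_residual : hwin_with (residual tau q m i0 k) k (q k).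
Proof.
move=> r m' rq hr; apply: (@won_eq_from _ (splice k q r)) => [j ?|]; first exact: spliceR.
apply: won_later (won_splice_residual rq hr) => // j j_in.
rewrite !splice_le //; try lia.
by split; [apply: noG | apply: hwin_prefix_noB].
Qed.

End Residual.

Lemma hwin_step tau i x m0 y : hwin_with tau i x -> move i x (tau [::] x) m0 y ->
  G i x y \/ (~ B i x y /\ hwin i.+1 y).
Proof.
move=> win_tau mv; case: (EM (G i x y)) => [|notG]; [by left | right].
pose q j := if j <= i then x else y.
have hq j : i <= j < i.+1 -> hstep tau i q (fun=> m0) j.
  move=> j_in; have -> : j = i by lia.
  by rewrite /hstep /hist subnn /q leqnn ltnn.
have win_q : hwin_with tau i (q i) by rewrite /q leqnn.
have noG j : i <= j < i.+1 -> ~ edge G q j.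
  move=> j_in; have -> : j = i by lia.
  by rewrite /q leqnn ltnn.
have := hwin_residual win_q (leqnSn i) hq noG; rewrite {2}/q ltnn => win'.
split; last by exists (residual tau q (fun=> m0) i i.+1).
by have := hwin_prefix_noB win_q (leqnSn i) hq noG (j := i); rewrite /q leqnn ltnn; apply; lia.
Qed.

(* Positional strategies winning from single positions are merged by following, at
   each position, the strategy of the pickle-least origin from which the position is
   [live]. Along a play this origin can only decrease, so it eventually stabilises and
   the play ends up following a single winning strategy. *)
Section Uniform.
Variable sg : nat * Q -> nat -> Q -> Opt.
Hypothesis sgP : forall u, pwin u.1 u.2 -> pwin_with (sg u) u.1 u.2.

Definition live u k y := pwin u.1 u.2 /\ exists q, [/\ q u.1 = u.2, u.1 <= k, q k = y &
  forall j, u.1 <= j < k -> [/\ pstep (sg u) q j, ~ edge G q j & ~ edge B q j]].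

Lemma live_win u k y : live u k y -> pwin_with (sg u) k y.
Proof.
move=> [win_u [q [q_u le_uk q_k hq]]] r r_k hr; rewrite -{}q_k in r_k.
apply: (@won_eq_from _ (splice k q r)) => [j ?|]; first exact: spliceR.
apply: (@won_later u.1) => // [j j_in|].
  by rewrite !splice_le //; [have [] := hq j j_in | lia | lia].
apply: sgP => //; first by rewrite splice_le.
by apply: follows_splice r_k hr => // j /hq[].
Qed.

Lemma live_self k y : pwin k y -> live (k, y) k y.
Proof. by move=> win_ky; split=> //; exists (fun=> y); split=> // j /=; lia. Qed.

Lemma live_next u k y y' : live u k y -> step k y (sg u k y) y' ->
  G k y y' \/ (~ B k y y' /\ live u k.+1 y').
Proof.
move=> live_uk sky'; case: (EM (G k y y')) => [|notG]; [by left | right].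
have [//|[notB _]] := pwin_with_step (live_win live_uk) sky'.
have [win_u [q [q_u le_uk q_k hq]]] := live_uk.
split=> //; split=> //; exists (fun j => if j <= k then q j else y').
split=> [||/=|j j_in]; [by rewrite le_uk | lia | by rewrite ltnn |].
case: (ltnP j k) => [lt_jk|le_kj].
  by rewrite /pstep /= !ifT ?(ltnW lt_jk) //; apply: hq; lia.
have -> : j = k by lia.
by rewrite /pstep /= leqnn ltnn q_k.
Qed.

Variable origin : nat -> Q -> nat * Q.
Hypothesis originP : forall k y, pwin k y ->
  live (origin k y) k y /\ forall u, live u k y -> pickle (origin k y) <= pickle u.

Definition least_origin_strategy k y := sg (origin k y) k y.

Lemma least_origin_wins k y : pwin k y -> pwin_with least_origin_strategy k y.
Proof.
move=> win_ky q q_k hq.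
have W_step j : k <= j -> pwin j (q j) ->
    edge G q j \/ (~ edge B q j /\ live (origin j (q j)) j.+1 (q j.+1)).
  by move=> le_kj /originP[live_j _]; apply: live_next live_j (hq j le_kj).
have live_pwin u j x : live u j x -> pwin j x by move=> /live_win; exists (sg u).
case: (@hitsG_or_invariant pwin k q) => [|j le_kj /(W_step j le_kj)|hitG|inv].
- by rewrite q_k.
- by case=> [|[? /live_pwin]]; [left | right].
- by left.
pose a n := pickle (origin (k + n) (q (k + n))).
have [N constN] : exists N, forall n, N <= n -> a n = a N.
  apply: nonincreasing_eventually_const => n; have [win_n notG _] := inv (k + n) (leq_addr _ _).
  have [/notG[]|[_ live_n1]] := W_step _ (leq_addr _ _) win_n.
  by rewrite /a addnS; apply: (originP (live_pwin _ _ _ live_n1)).2.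
apply: (@won_earlier _ (k + N)) => [||]; first exact: leq_addr.
  by move=> j j_in; case: (inv j) => //; lia.
have [win_N _ _] := inv (k + N) (leq_addr _ _); have [live_u _] := originP win_N.
apply: (live_win live_u) => // j /subnKC <-; rewrite -addnA.
have /(pcan_inj pickleK) org_j : a (N + (j - (k + N))) = a N by apply: constN; exact: leq_addr.
by rewrite /pstep -org_j; apply: hq; lia.
Qed.

End Uniform.

Lemma pwin_uniform : exists s, forall k y, pwin k y -> pwin_with s k y.
Proof.
have [sg sgP] : {sg : nat * Q -> nat -> Q -> Opt &
    forall u, pwin u.1 u.2 -> pwin_with (sg u) u.1 u.2}.
  apply: (choice (P := fun u s => pwin u.1 u.2 -> pwin_with s u.1 u.2)) => u.
  by case: (EM (pwin u.1 u.2)) => [[s ?]|lose]; [exists s | exists (fun _ _ => o0)].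
have [origin originP] : {origin : nat * Q -> nat * Q & forall v, pwin v.1 v.2 ->
    live sg (origin v) v.1 v.2 /\ forall u, live sg u v.1 v.2 -> pickle (origin v) <= pickle u}.
  apply: (choice (P := fun v o => pwin v.1 v.2 -> live sg o v.1 v.2 /\
    forall u, live sg u v.1 v.2 -> pickle o <= pickle u)) => -[k y] /=.
  case: (EM (pwin k y)) => [win_ky|]; last by exists (k, y).
  have ex_org : exists n, exists u, pickle u = n /\ live sg u k y.
    by exists (pickle (k, y)), (k, y); split=> //; apply: live_self.
  have [n [[u [<- live_u]] min_n]] := ex_least ex_org.
  by exists u => _; split=> // u' live_u'; apply: min_n; exists u'.
exists (least_origin_strategy sg (fun k y => origin (k, y))) => k y.
by apply: least_origin_wins => // k' y'; apply: (originP (k', y')).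
Qed.

Lemma won_of_uniform s j p : (forall k y, pwin k y -> pwin_with s k y) -> pwin j (p j) ->
  (forall l, j <= l -> pwin l (p l) -> pstep s p l) -> won j p.
Proof.
move=> sP win_j hp; have [l le_jl win_l|hitG|inv] := @hitsG_or_invariant pwin j p win_j.
- have [|[notB win']] := pwin_with_step (sP _ _ win_l) (hp l le_jl win_l); first by left.
  by right; split=> //; exists s.
- by left.
by apply: (sP _ _ win_j p erefl) => l le_jl; apply: hp => //; case: (inv l le_jl).
Qed.

End Winning.

Definition memoryless_upto d := forall G B c, (forall i x y, c i x y <= d) ->
  forall i0 x, hwin G B c i0 x -> pwin G B c i0 x.

Definition demote d (c : nat -> Q -> Q -> nat) i y y' := if c i y y' == d then 0 else c i y y'.

Lemma demote_le d (c : nat -> Q -> Q -> nat) : (forall i x y, c i x y <= d) ->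
  forall i x y, demote d c i x y <= d.-1.
Proof. by move=> c_le i x y; rewrite /demote; case: eqP => // neq; have := c_le i x y; lia. Qed.

Lemma memoryless_upto0 : memoryless_upto 0.
Proof.
move=> G B c c_le0 i0 x0 win_x0.
have [tw twP] : {tw : nat * Q -> seq (Q * M) -> Q -> Opt &
    forall v, hwin G B c v.1 v.2 -> hwin_with G B c (tw v) v.1 v.2}.
  apply: (choice (P := fun v t => hwin G B c v.1 v.2 -> hwin_with G B c t v.1 v.2)) => v.
  by case: (EM (hwin G B c v.1 v.2)) => [[t ?]|lose]; [exists t | exists (fun _ _ => o0)].
exists (fun k y => tw (k, y) [::] y) => q q_i0 hq.
case: (@hitsG_or_invariant G B (hwin G B c) i0 q) => [|k le_i0k win_k|hitG|inv].
- by rewrite q_i0.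
- by have [m0 mv] := hq k le_i0k; apply: hwin_step (twP (k, q k) win_k) mv.
- by left.
right; split=> [j /inv[] //|]; apply: (@parity_acc_max_even _ 0) => // N.
by exists N => //; have := c_le0 N (q N) (q N.+1); lia.
Qed.

(* Even maximal priority d: on the attractor of the d-edges that lead back into the
   winning region Eve moves towards such an edge; elsewhere she wins a game in which d
   is demoted and reaching the attractor counts as a win. A play seeing d infinitely
   often is won, any other one eventually stays outside the attractor. *)
Section EvenCase.
Variables (G B : nat -> Q -> Q -> Prop) (c : nat -> Q -> Q -> nat) (d : nat).
Hypotheses (even_d : ~~ odd d) (c_le : forall i x y, c i x y <= d).
Hypothesis IH : memoryless_upto d.-1.

Definition even_target i y y' := G i y y' \/ [/\ ~ B i y y', c i y y' = d & hwin G B c i.+1 y'].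

Fixpoint attr n i y := if n is n'.+1 then exists o, forall y', step i y o y' ->
  even_target i y y' \/ (~ B i y y' /\ attr n' i.+1 y') else False.

Definition attracted i y := exists n, attr n i y.
Definition evenG i y y' := even_target i y y' \/ (~ B i y y' /\ attracted i.+1 y').

Local Notation pwin_low := (pwin evenG B (demote d c)).
Local Notation pwin_low_with := (pwin_with evenG B (demote d c)).
Local Notation won_low := (won evenG B (demote d c)).

Lemma hwin_pwin_evenG i y : hwin G B c i y -> pwin_low i y.
Proof.
move=> [tau win_tau]; apply: IH; first exact: demote_le.
exists tau => r mr r_i hr; case: (win_tau r mr r_i hr) => [[l [le_il Gl noB]] | [noB par]].
  by left; exists l; split=> //; do 2 left.
case: (EM (hitsG evenG B i r)) => [|noG_low]; [by left | right; split=> //].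
have noG l : i <= l -> ~ edge G r l.
  by move=> le_il Gl; apply: noG_low; exists l; split=> // [|j j_in]; [do 2 left | apply: noB; lia].
apply: (parity_acc_eq_from (N := i)) par => j le_ij; rewrite /demote.
case: eqP => // cd; case: noG_low.
have win_j1 : hwin G B c j.+1 (r j.+1).
  exists (residual tau r mr i j.+1); apply: hwin_residual; first by rewrite r_i.
  - lia.
  - by move=> l l_in; apply: hr; lia.
  - by move=> l l_in; apply: noG; lia.
exists j; split=> // [|l l_in]; last by apply: noB; lia.
by left; right; split=> //; apply: noB.
Qed.

Lemma even_target_cases k y y' : even_target k y y' ->
  G k y y' \/ (~ B k y y' /\ pwin_low k.+1 y').
Proof. by case=> [|[notB _ /hwin_pwin_evenG]]; [left | right]. Qed.

Lemma attractor_strategy : exists (oE : nat -> Q -> Opt) (rk : nat -> Q -> nat),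
  forall k y y', attracted k y -> step k y (oE k y) y' ->
  even_target k y y' \/ [/\ ~ B k y y', attracted k.+1 y' & rk k.+1 y' < rk k y].
Proof.
have [rk rkP] : {rk : nat * Q -> nat & forall v, attracted v.1 v.2 ->
    attr (rk v) v.1 v.2 /\ forall n, attr n v.1 v.2 -> rk v <= n}.
  apply: (choice (P := fun v r => attracted v.1 v.2 ->
    attr r v.1 v.2 /\ forall n, attr n v.1 v.2 -> r <= n)) => v.
  case: (EM (attracted v.1 v.2)) => [att|notA]; last by exists 0.
  by have [n ?] := ex_least (P := fun n => attr n v.1 v.2) att; exists n.
have [oE oEP] : {oE : nat * Q -> Opt & forall v, attracted v.1 v.2 -> forall y',
    step v.1 v.2 (oE v) y' ->
    even_target v.1 v.2 y' \/ (~ B v.1 v.2 y' /\ attr (rk v).-1 v.1.+1 y')}.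
  apply: (choice (P := fun v o => attracted v.1 v.2 -> forall y', step v.1 v.2 o y' ->
    even_target v.1 v.2 y' \/ (~ B v.1 v.2 y' /\ attr (rk v).-1 v.1.+1 y'))) => v.
  case: (EM (attracted v.1 v.2)) => [/rkP[]|notA]; last by exists o0.
  by case: (rk v) => [|n] //= [o ho] _; exists o.
exists (fun k y => oE (k, y)), (fun k y => rk (k, y)) => k y y' att sky'.
have [|[notB attr_y']] := oEP (k, y) att y' sky'; [by left | right].
have att' : attracted k.+1 y' by exists (rk (k, y)).-1.
have [attr_y _] := rkP (k, y) att; have [_ /(_ _ attr_y') le_rk] := rkP (k.+1, y') att'.
by split=> //; move: attr_y le_rk => /=; case: (rk (k, y)) => //= n _; lia.
Qed.

Section EvenStrategy.
Variables (oE : nat -> Q -> Opt) (rk : nat -> Q -> nat) (s_low : nat -> Q -> Opt).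
Hypothesis oEP : forall k y y', attracted k y -> step k y (oE k y) y' ->
  even_target k y y' \/ [/\ ~ B k y y', attracted k.+1 y' & rk k.+1 y' < rk k y].
Hypothesis s_lowP :
  forall k y, pwin_low k y -> pwin_low_with s_low k y.

Definition even_strategy k y := if pselect (attracted k y) then oE k y else s_low k y.

Lemma even_strategy_step k y y' : attracted k y \/ pwin_low k y ->
  step k y (even_strategy k y) y' ->
  G k y y' \/ (~ B k y y' /\ (attracted k.+1 y' \/ pwin_low k.+1 y')).
Proof.
have target k' x x' : even_target k' x x' ->
    G k' x x' \/ (~ B k' x x' /\ (attracted k'.+1 x' \/ pwin_low k'.+1 x')).
  by case/even_target_cases=> [|[notB win_low]]; [left | right; split=> //; right].
rewrite /even_strategy; case: pselect => [att _ /(oEP att)|notA [//|win_low]].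
  by case=> [/target //|[notB att' _]]; right; split=> //; left.
move/(pwin_with_step (s_lowP win_low)).
case=> [[/target //|[notB att']]|[notB win_low1]]; right; split=> //; first by left.
by right; exists s_low.
Qed.

Lemma attracted_vanish N q : (forall k, N <= k ->
    [/\ pstep even_strategy q k, ~ edge G q k & edge c q k <> d]) ->
  forall k, N <= k -> ~ attracted k (q k).
Proof.
move=> hq k le_Nk att.
suff bound n : forall k, N <= k -> attracted k (q k) -> rk k (q k) < n -> False.
  exact: bound _ k le_Nk att (ltnSn _).
elim: n => // n IHn {}k {}le_Nk {}att lt_rk; have [sk notG notd] := hq k le_Nk.
move: sk; rewrite /pstep /even_strategy; case: pselect => // _ /(oEP att).
case=> [[//|[_ /notd//]]|[_ att' lt_rk']]; apply: (IHn k.+1) => //; lia.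
Qed.

Lemma even_strategy_wins i0 x : hwin G B c i0 x -> pwin_with G B c even_strategy i0 x.
Proof.
move=> win_x q q_i0 hq.
case: (@hitsG_or_invariant G B (fun k y => attracted k y \/ pwin_low k y) i0 q)
  => [|k le_i0k inv_k|hitG|inv]; [by right; rewrite q_i0; apply: hwin_pwin_evenG
  | exact: even_strategy_step inv_k (hq k le_i0k) | by left |].
right; split=> [j /inv[] //|].
case: (EM (forall N, exists2 k, N <= k & edge c q k = d)) => [|/existsNP[N noD]].
  exact: parity_acc_max_even.
have {}noD k : N <= k -> edge c q k <> d by move=> le_Nk cd; apply: noD; exists k.
pose N' := maxn N i0.
have notA : forall k, N' <= k -> ~ attracted k (q k).
  apply: attracted_vanish => k le_N'k; have [_ notG _] := inv k ltac:(lia).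
  by split=> //; [apply: hq | apply: noD]; lia.
have win_low : won_low N' q.
  have [[att|win_low] _ _] := inv N' (leq_maxr N i0); first by case: (notA N' (leqnn _)).
  apply: (s_lowP win_low erefl) => k le_N'k; have := hq k ltac:(lia).
  by rewrite /pstep /even_strategy; case: pselect => // att; case: (notA k) => //; lia.
case: win_low => [[l [le_N'l Gl_low _]]|[_ par_low]].
  have [_ notG _] := inv l ltac:(lia).
  case: Gl_low => [[//|[_ cd _]]|[_ att]]; first by case: (noD l) => //; lia.
  by case: (notA l.+1) => //; lia.
apply: (parity_acc_eq_from (N := N')) par_low => j le_N'j; rewrite /demote.
by case: eqP => // cd; case: (noD j) => //; lia.
Qed.

End EvenStrategy.

Lemma even_hwin_pwin i0 x : hwin G B c i0 x -> pwin G B c i0 x.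
Proof.
have [oE [rk oEP]] := attractor_strategy; have [s_low s_lowP] := pwin_uniform evenG B (demote d c).
by move=> /(even_strategy_wins oEP s_lowP) win_x; exists (even_strategy oE s_low).
Qed.

End EvenCase.

(* Odd maximal priority d: a cut of a play consistent with the winning strategy [tau]
   is pending if the play has so far avoided decisive edges and the positional winning
   region. If every pending cut extends through a d-edge, the limit play sees d
   infinitely often and is lost. Otherwise, after a maximal pending cut, [tau] wins
   the game in which d-edges lose and reaching the positional winning region wins; by
   induction it can be made positional, so the cut position is positionally winning
   after all. *)
Section OddCase.
Variables (G B : nat -> Q -> Q -> Prop) (c : nat -> Q -> Q -> nat) (d : nat).
Hypotheses (odd_d : odd d) (c_le : forall i x y, c i x y <= d).
Hypothesis IH : memoryless_upto d.-1.

Definition oddG i y y' := G i y y' \/ (~ B i y y' /\ pwin G B c i.+1 y').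
Definition oddB i y y' := B i y y' \/ [/\ c i y y' = d, ~ G i y y' & ~ pwin G B c i.+1 y'].

Local Notation pwin_odd := (pwin oddG oddB (demote d c)).
Local Notation won_odd := (won oddG oddB (demote d c)).
Local Notation hwin_odd := (hwin oddG oddB (demote d c)).

Section OddStrategy.
Variables (s_win s_odd : nat -> Q -> Opt).
Hypothesis s_winP : forall k y, pwin G B c k y -> pwin_with G B c s_win k y.
Hypothesis s_oddP : forall k y, pwin_odd k y -> pwin_with oddG oddB (demote d c) s_odd k y.

Definition odd_strategy k y := if pselect (pwin G B c k y) then s_win k y else s_odd k y.

Lemma odd_strategy_step k y y' : pwin G B c k y \/ pwin_odd k y ->
  step k y (odd_strategy k y) y' ->
  G k y y' \/ (~ B k y y' /\ (pwin G B c k.+1 y' \/ pwin_odd k.+1 y')).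
Proof.
rewrite /odd_strategy; case: pselect => [win_y _|notU [//|win_odd]].
  move/(pwin_with_step (s_winP win_y)) => [|[notB ?]]; first by left.
  by right; split=> //; left; exists s_win.
move/(pwin_with_step (s_oddP win_odd)) => [[|[notB ?]]|[notB' ?]]; first by left.
  by right; split=> //; left.
by right; split=> [Bj|]; [apply: notB'; left | right; exists s_odd].
Qed.

Lemma odd_strategy_wins k x : pwin_odd k x -> pwin_with G B c odd_strategy k x.
Proof.
move=> win_x p p_k hp.
have [j le_kj inv_j|hitG|inv] := @hitsG_or_invariant G B
  (fun j y => pwin G B c j y \/ pwin_odd j y) k p ltac:(by right; rewrite p_k).
- exact: odd_strategy_step inv_j (hp j le_kj).
- by left.
case: (EM (exists j, k <= j /\ pwin G B c j (p j))) => [[j [le_kj win_j]]|noU].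
  apply: (@won_earlier _ _ _ k j) => // [l l_in|]; first by case: (inv l) => //; lia.
  apply: (won_of_uniform s_winP win_j) => l le_jl win_l; have := hp l ltac:(lia).
  by rewrite /pstep /odd_strategy; case: pselect.
have {}noU j : k <= j -> ~ pwin G B c j (p j) by move=> le_kj win_j; apply: noU; exists j.
have win_odd : won_odd k p.
  apply: (s_oddP win_x p_k) => j le_kj; have := hp j le_kj.
  by rewrite /pstep /odd_strategy; case: pselect => // win_j; case: (noU j).
case: win_odd => [[l [le_kl [Gl|[_ Ul]] _]]|[noB' par]].
- by case: (inv l le_kl).
- by case: (noU l.+1) => //; lia.
right; split=> [l /inv[] //|]; apply: (parity_acc_eq_from (N := k)) par => l le_kl.
rewrite /demote; case: eqP => // cd; case: (noB' l le_kl); right.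
by split=> //; [case: (inv l le_kl) | apply: noU; lia].
Qed.

End OddStrategy.

Lemma pwin_of_pwin_odd k x : pwin_odd k x -> pwin G B c k x.
Proof.
have [s_win s_winP] := pwin_uniform G B c.
have [s_odd s_oddP] := pwin_uniform oddG oddB (demote d c).
by move=> /(odd_strategy_wins s_winP s_oddP) win_x; exists (odd_strategy s_win s_odd).
Qed.

Record cut := Cut { cut_play : nat -> Q; cut_moves : nat -> M; cut_at : nat }.

Section Pending.
Variables (tau : seq (Q * M) -> Q -> Opt) (i0 : nat) (v0 : Q).
Hypothesis win_tau : hwin_with G B c tau i0 v0.

Definition calm q j := [/\ ~ edge G q j, ~ edge B q j & ~ pwin G B c j.+1 (q j.+1)].

Definition pending t := [/\ hfollows tau i0 (cut_play t) (cut_moves t), cut_play t i0 = v0,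
  i0 <= cut_at t, ~ pwin G B c (cut_at t) (cut_play t (cut_at t)) &
  forall j, i0 <= j < cut_at t -> calm (cut_play t) j].

Definition extends t t' := [/\ cut_at t < cut_at t',
  forall j, j <= cut_at t -> cut_play t' j = cut_play t j,
  forall j, j < cut_at t -> cut_moves t' j = cut_moves t j &
  exists2 j, cut_at t <= j < cut_at t' & edge c (cut_play t') j = d].

Lemma pending_splice_extends q m k r m' k' : pending (Cut q m k) -> r k = q k ->
  hfollows (residual tau q m i0 k) k r m' -> k < k' -> (forall l, k <= l < k' -> calm r l) ->
  (exists2 l, k <= l < k' & edge c r l = d) -> exists t', pending t' /\ extends (Cut q m k) t'.
Proof.
case=> /= hq q_i0 le_i0k _ calm_q rq hr lt_kk' calm_r [l l_in cd].
exists (Cut (splice k q r) (splice k m m') k'); split; split=> //=.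
- by apply: hfollows_splice rq hr => // j j_in; apply: hq; lia.
- by rewrite splice_le.
- lia.
- have [_ _] := calm_r k'.-1 ltac:(lia); rewrite prednK ?spliceR //; lia.
- move=> j j_in; rewrite /calm; case: (ltnP j k) => [lt_jk|le_kj].
    by rewrite !splice_le //; [apply: calm_q; lia | lia].
  by rewrite !spliceR //; [apply: calm_r; lia | lia].
- by move=> j; apply: splice_le.
- by move=> j; apply: spliceL.
- by exists l; rewrite // !spliceR //; lia.
Qed.

Section Continuation.
Variables (q : nat -> Q) (m : nat -> M) (k : nat) (r : nat -> Q) (m' : nat -> M).
Hypothesis pt : pending (Cut q m k).
Hypothesis noext : ~ exists t', pending t' /\ extends (Cut q m k) t'.
Hypotheses (rq : r k = q k) (hr : hfollows (residual tau q m i0 k) k r m').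

Lemma continuation_won : won G B c i0 (splice k q r).
Proof.
have [/= hq q_i0 le_i0k _ _] := pt; have hs : hfollows tau i0 (splice k q r) (splice k m m').
  by apply: hfollows_splice rq hr => // j j_in; apply: hq; lia.
by apply: (win_tau _ hs); rewrite splice_le.
Qed.

Lemma continuation_no_d l k' : k <= l < k' -> (forall l', k <= l' < k' -> calm r l') ->
  edge c r l <> d.
Proof.
move=> l_in calm_r cd; apply: noext.
by apply: (pending_splice_extends pt rq hr _ calm_r); [lia | exists l].
Qed.

Lemma continuation_noG j : (forall l, k <= l < j -> calm r l) ->
  forall l, i0 <= l < j -> ~ edge G (splice k q r) l.
Proof.
move=> calm_r l l_in; have [_ _ _ _ /= calm_q] := pt; case: (ltnP l k) => [lt_lk|le_kl].
  have /calm_q[notG _ _] : i0 <= l < k by lia.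
  by rewrite !splice_le // ltnW.
have /calm_r[notG _ _] : k <= l < j by lia.
by rewrite !spliceR // leqW.
Qed.

Lemma first_uncalm_hitsG j : k <= j -> ~ calm r j -> (forall l, k <= l < j -> calm r l) ->
  hitsG oddG oddB k r.
Proof.
move=> le_kj notcalm calm_r; have [_ _ /= le_i0k _ _] := pt.
exists j; split=> // [|l l_in [Bl|[cd _ _]]].
- case: (EM (edge G r j)) => [|notG]; [by left | right].
  have notB : ~ edge B r j.
    move=> Bj; apply: (won_noB continuation_won (j := j)) => [|l l_in|]; first lia.
      case: (ltnP l j) => ?; first by apply: (continuation_noG calm_r) => //; lia.
      have -> : l = j by lia.
      by rewrite !spliceR // leqW.
    by rewrite !spliceR // leqW.
  by split=> //; case: (EM (pwin G B c j.+1 (r j.+1))) => // notU; case: notcalm.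
- by case: (calm_r l l_in).
- by apply: (continuation_no_d (k' := l.+1) _ _ cd) => [|l' ?]; [|apply: calm_r]; lia.
Qed.

Lemma always_calm_won : (forall l, k <= l -> calm r l) -> won_odd k r.
Proof.
move=> calm_r; have calm_upto j l : k <= l < j -> calm r l by move=> l_in; apply: calm_r; lia.
have no_d l : k <= l -> edge c r l <> d.
  by move=> le_kl; apply: (continuation_no_d (k' := l.+1)) => [|l' ?]; [|apply: calm_r]; lia.
case: continuation_won => [[l [le_i0l Gl _]]|[_ par]].
  by case: (continuation_noG (calm_upto l.+1) (l := l) ltac:(lia) Gl).
right; split=> [l le_kl [Bl|[cd _ _]]|]; [by case: (calm_r l le_kl) | exact: (no_d l le_kl cd) |].
apply: (parity_acc_eq_from (N := k)) par => l le_kl; rewrite !spliceR /demote; try lia.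
by case: eqP => // /(no_d l le_kl).
Qed.

Lemma continuation_odd_won : won_odd k r.
Proof.
case: (EM (exists j, k <= j /\ ~ calm r j)) => [ex|allcalm]; last first.
  by apply: always_calm_won => l le_kl; case: (EM (calm r l)) => // nc; case: allcalm; exists l.
have [j [[le_kj notcalm] minj]] := ex_least ex; left; apply: (first_uncalm_hitsG le_kj notcalm).
by move=> l l_in; case: (EM (calm r l)) => // nc; have := minj l (conj _ nc); lia.
Qed.

End Continuation.

Lemma maximal_pending_hwin t : pending t -> ~ (exists t', pending t' /\ extends t t') ->
  hwin_odd (cut_at t) (cut_play t (cut_at t)).
Proof.
case: t => q m k pt noext /=; exists (residual tau q m i0 k) => r m' rq hr.
exact: (continuation_odd_won pt noext rq hr).
Qed.

Lemma pending_chain_limit (H : nat -> cut) :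
  (forall n, pending (H n)) -> (forall n, extends (H n) (H n.+1)) ->
  exists q m, [/\ q i0 = v0, hfollows tau i0 q m, forall j, i0 <= j -> calm q j &
                  forall N, exists2 j, N <= j & edge c q j = d].
Proof.
move=> pendH extH; have le_cut n : n <= cut_at (H n).
  by elim: n => [|n IHn]; [lia | have [lt_cut _ _ _] := extH n; lia].
pose q j := cut_play (H j.+1) j; pose m j := cut_moves (H j.+1) j.
have qE : forall n j, j < (cut_at (H n)).+1 -> q j = cut_play (H n) j.
  apply: (@chain_limit _ (fun n => cut_play (H n))) => n; first by have := le_cut n; lia.
  by have [lt_cut eq_q _ _] := extH n; split=> [|j]; [lia | apply: eq_q].
have mE : forall n j, j < cut_at (H n) -> m j = cut_moves (H n) j.
  apply: (@chain_limit _ (fun n => cut_moves (H n))) => n; first exact: le_cut.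
  by have [lt_cut _ eq_m _] := extH n; split=> [|j]; [lia | apply: eq_m].
exists q, m; split=> [|j le_i0j|j le_i0j|N]; first by have [] := pendH i0.+1.
- have [hq _ _ _ _] := pendH j.+1; have := le_cut j.+1 => le_j1.
  rewrite /hstep (@hist_eq _ _ (cut_play (H j.+1)) (cut_moves (H j.+1))).
    by rewrite (qE j.+1 j.+1) //; apply: hq.
  by move=> l l_in; rewrite (qE j.+1) ?(mE j.+1) //; lia.
- have [_ _ _ _ calm_j] := pendH j.+1; have := le_cut j.+1 => le_j1.
  by rewrite /calm (qE j.+1 j.+1) //; apply: calm_j; lia.
- have [_ _ _ [j j_in cd]] := extH N; have := le_cut N => le_N.
  by exists j; [lia | rewrite !(qE N.+1) //; lia].
Qed.

Lemma pending_chain_absurd : (forall t, pending t -> exists t', pending t' /\ extends t t') ->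
  forall t, ~ pending t.
Proof.
move=> ext t0 pt0.
have [nxt nxtP] : {nxt : cut -> cut & forall t, pending t -> pending (nxt t) /\ extends t (nxt t)}.
  apply: (choice (P := fun t t' => pending t -> pending t' /\ extends t t')) => t.
  by case: (EM (pending t)) => [/ext[t' ?]|notp]; [exists t' | exists t].
have pendH n : pending (iter n nxt t0) by elim: n => //= n /nxtP[].
have [q [m [q_i0 hq calm_q inf_d]]] := pending_chain_limit pendH (fun n => (nxtP _ (pendH n)).2).
case: (win_tau q_i0 hq) => [[l [le_i0l Gl _]]|[_ par]]; first by case: (calm_q l le_i0l).
exact: parity_acc_max_odd odd_d (fun j => c_le _ _ _) inf_d par.
Qed.

End Pending.

Lemma odd_hwin_pwin i0 x : hwin G B c i0 x -> pwin G B c i0 x.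
Proof.
move=> [tau win_tau]; case: (EM (pwin G B c i0 x)) => // notU.
have [q [m [q_i0 hq]]] := hfollows_exists tau i0 x.
have pt0 : pending tau i0 x (Cut q m i0) by split=> //= [|j]; [rewrite q_i0 | lia].
case: (EM (forall t, pending tau i0 x t -> exists t', pending tau i0 x t' /\ extends t t')).
  by move=> ext; case: (pending_chain_absurd win_tau ext pt0).
move=> /existsNP[t /not_implyP[pt noext]]; have [_ _ _ notU' _] := pt; case: notU'.
exact/pwin_of_pwin_odd/(IH (demote_le c_le))/(maximal_pending_hwin win_tau pt noext).
Qed.

End OddCase.

Lemma memoryless d : memoryless_upto d.
Proof.
elim: d => [|d IHd]; first exact: memoryless_upto0.
move=> G B c c_le i0 x; case: (boolP (odd d.+1)) => [odd_d|even_d].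
  exact: odd_hwin_pwin odd_d c_le IHd i0 x.
exact: even_hwin_pwin even_d c_le IHd i0 x.
Qed.

End Game.

Lemma reach_total (Q : Type) (f : pbf Q) ch pre : exists p q', reach f ch pre p q'.
Proof.
elim: f pre => [q|f1 IH1 f2 IH2|f1 IH1 f2 IH2] pre /=; first by exists [::], q.
  by have [p [q' ?]] := IH1 (rcons pre false); exists (false :: p), q'.
case chE: (ch pre).
  by have [p [q' ?]] := IH2 (rcons pre true); exists (true :: p), q'.
by have [p [q' ?]] := IH1 (rcons pre false); exists (false :: p), q'.
Qed.

Section Boxes.
Variables (Sigma Q : finType) (A : APA Sigma Q).

Definition local_box (a : Sigma) (sigma : Q -> seq bool -> bool) : {set Q * Sigma * Q} :=
  [set t | `[< t.1.2 = a /\ exists p, reach (a_delta A t.1.1 a) (sigma t.1.1) [::] p t.2 >]].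

Lemma local_boxP a sigma : boxOf A a (local_box a sigma).
Proof. by exists sigma => t; rewrite inE; split=> /asboolP. Qed.

Definition box_of a sigma : BoxT A :=
  exist _ (local_box a sigma) (ex_intro _ a (local_boxP a sigma)).

Lemma inL_boxes w : inL A w ->
  exists beta : nat -> BoxT A, (forall i, boxOf A (w i) (proj1_sig (beta i))) /\ univ_acc beta.
Proof.
move=> [tau win_tau].
(* A positional strategy of this game picks a local strategy for each round and
   state, i.e. a box for each round. *)
pose mv i x (o : seq bool -> bool) p y := reach (a_delta A x (w i)) o [::] p y.
pose no_edge (i : nat) (x y : Q) := False.
pose prio i x y := a_prio A x (w i) y.
have le_d i x y : prio i x y <= \max_(t : Q * Sigma * Q) a_prio A t.1.1 t.1.2 t.2.
  exact: (@leq_bigmax _ (fun t => a_prio A t.1.1 t.1.2 t.2) (x, w i, y)).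
have win_init : hwin mv no_edge no_edge prio 0 (a_init A).
  exists tau => q p q_0 hq; right; split=> [j _ []|]; apply: (win_tau _ p); split=> // i.
  by have := hq i (leq0n i); rewrite /hstep /mv /hist subn0.
have [sig win_sig] := memoryless (fun i x o => reach_total _ o [::]) (fun _ => false) le_d win_init.
exists (fun i => box_of (w i) (sig i)); split=> [i|q a q_0 in_box]; first exact: local_boxP.
have {}in_box i :
    a i = w i /\ exists p, reach (a_delta A (q i) (w i)) (sig i (q i)) [::] p (q i.+1).
  by move: (in_box i); rewrite inE => /asboolP.
case: (win_sig q q_0) => [i _|[l [_ [] _]]|[_ par]]; first by have [_ [p ?]] := in_box i; exists p.
by apply: (parity_acc_eq_from (N := 0)) par => j _; have [-> _] := in_box j.
Qed.

End Boxes.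

Theorem mainTheorem7 (Sigma Q : finType) (A : APA Sigma Q) (P : finType)
  (p0 : P) (dB : P -> BoxT A -> P) (cB : P -> BoxT A -> nat) :
  (forall beta : nat -> BoxT A, dpa_acc p0 dB cB beta <-> univ_acc beta) ->
  BA_GFG p0 dB cB -> exists_GFG A.
Proof.
move=> dpa_univ [s [s_box s_acc]].
have [sgm sgmP] : {sgm : seq Sigma * Sigma -> Q -> seq bool -> bool & forall ha t,
    t \in proj1_sig (s ha.1 ha.2) <->
    t.1.2 = ha.2 /\ exists p, reach (a_delta A t.1.1 ha.2) (sgm ha t.1.1) [::] p t.2}.
  apply: (choice (P := fun ha sg => forall t, t \in proj1_sig (s ha.1 ha.2) <->
    t.1.2 = ha.2 /\ exists p, reach (a_delta A t.1.1 ha.2) (sg t.1.1) [::] p t.2)) => ha.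
  exact: s_box.
exists (fun h x a => sgm ([seq e.1.2 | e <- h], a) x) => w q p [q_0 hplay].
case: (EM (inL A w)) => [/inL_boxes[beta [beta_box beta_acc]]|]; [right | by left].
have w_in_BA : BA_lang p0 dB cB w by exists beta; split=> //; apply/dpa_univ.
have /dpa_univ run_acc := s_acc w w_in_BA.
apply: run_acc => // i; apply/(sgmP (_, _)); split=> //; exists (p i).
by have := hplay i; rewrite -map_comp.
Qed.
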